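(* Let $(R,\mathfrak m)$ be a noetherian local ring and $M$ an $R$-module. If $M$ admits a primary decomposition, then $\operatorname{Ass}_R(M)=\operatorname{Att}_R(D(M))$. If $M$ admits a secondary decomposition, then $\operatorname{Att}_R(M)=\operatorname{Ass}_R(D(M))$.
   Context: $E=E_R(R/\mathfrak m)$ denotes a fixed injective hull of $R/\mathfrak m$, and $D(\cdot)=\operatorname{Hom}_R(\cdot,E)$. A nonzero module $N$ is coprimary if for every $x\in R$ multiplication by $x$ on $N$ is injective or nilpotent; a submodule $U\subseteq M$ is primary if $M/U$ is coprimary; a primary decomposition of $M$ is a tuple $(U_1,\dots,U_s)$ of primary submodules with $U_1\cap\dots\cap U_s=0$. A nonzero module $N$ is secondary if for every $x\in R$ multiplication by $x$ on $N$ is surjective or nilpotent; a secondary decomposition of $M$ is a tuple $(U_1,\dots,U_s)$ of secondary submodules with $U_1+\dots+U_s=M$. For an arbitrary $R$-module $N$: $\operatorname{Ass}_R(N)$ is the set of primes $\mathfrak p$ with $\mathfrak p=\operatorname{Ann}_R(n)$ for some $n\in N$; $\operatorname{Att}_R(N)$ is the set of primes $\mathfrak p$ with $\mathfrak p=\operatorname{Ann}_R(N/U)$ for some submodule $U\subseteq N$. *)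

From HB Require Import structures.
From mathcomp Require Import all_boot all_order all_algebra.
From mathcomp Require Import boolp classical_sets functions.
Set Implicit Arguments. Unset Strict Implicit. Unset Printing Implicit Defensive.
Import GRing.Theory.
Local Open Scope ring_scope.

Definition is_ideal (R : comNzRingType) (I : R -> Prop) : Prop :=
  I 0 /\ (forall a b, I a -> I b -> I (a + b)) /\ (forall r a, I a -> I (r * a)).

Definition is_prime_ideal (R : comNzRingType) (P : R -> Prop) : Prop :=
  is_ideal P /\ ~ P 1 /\ (forall a b, P (a * b) -> P a \/ P b).

Definition noetherian_ring (R : comNzRingType) : Prop :=
  forall I : nat -> R -> Prop, (forall n, is_ideal (I n)) ->
    (forall n r, I n r -> I n.+1 r) ->
    exists N, forall n, (N <= n)%N -> forall r, I n r <-> I N r.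

Definition local_ring (R : comNzRingType) (m : R -> Prop) : Prop :=
  is_ideal m /\ ~ m 1 /\
  (forall I : R -> Prop, is_ideal I -> ~ I 1 -> forall r, I r -> m r).

Definition is_submod (R : comNzRingType) (V : lmodType R) (U : V -> Prop) : Prop :=
  U 0 /\ (forall x y, U x -> U y -> U (x + y)) /\ (forall r x, U x -> U (r *: x)).

Definition injective_module (R : comNzRingType) (E : lmodType R) : Prop :=
  forall (N N' : lmodType R) (i : {linear N -> N'}) (f : {linear N -> E}),
    injective i -> exists g : {linear N' -> E}, forall x, g (i x) = f x.

(* E is an injective hull of R/m: E is injective and contains an essential
   submodule R e isomorphic to R/m (i.e. Ann(e) = m). *)
Definition injective_hull_residue (R : comNzRingType) (m : R -> Prop)
  (E : lmodType R) : Prop :=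
  injective_module E /\
  exists e : E, (forall r, m r <-> r *: e = 0) /\
    (forall U : E -> Prop, is_submod U -> (exists x, U x /\ x <> 0) ->
       exists r, U (r *: e) /\ r *: e <> 0).

(* Matlis dual D(M) = Hom_R(M, E), realized as the submodule of R-linear
   maps inside the R-module of all functions M -> E. *)
Definition linear_fun (R : comNzRingType) (M E : lmodType R) (f : M -> E) : Prop :=
  (forall x y, f (x + y) = f x + f y) /\ (forall (r : R) x, f (r *: x) = r *: f x).

Definition DualMod (R : comNzRingType) (M E : lmodType R) : (M -> E) -> Prop :=
  @linear_fun R M E.

(* Associated / attached primes of the R-module N given as a submodule
   N of an ambient module V (N = whole V for an ordinary module). *)
Definition Ass (R : comNzRingType) (V : lmodType R) (N : V -> Prop)
  (p : R -> Prop) : Prop :=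
  is_prime_ideal p /\ exists n, N n /\ forall r, p r <-> r *: n = 0.

(* Ann_R(N/U) = { r | r N ⊆ U }. *)
Definition Att (R : comNzRingType) (V : lmodType R) (N : V -> Prop)
  (p : R -> Prop) : Prop :=
  is_prime_ideal p /\ exists U : V -> Prop, is_submod U /\ (forall x, U x -> N x) /\
    forall r, p r <-> (forall x, N x -> U (r *: x)).

(* U ⊆ M primary: M/U nonzero and each x acts injectively or nilpotently on M/U. *)
Definition primary_submod (R : comNzRingType) (M : lmodType R) (U : M -> Prop) : Prop :=
  is_submod U /\ (exists m, ~ U m) /\
  forall x : R, (forall m, U (x *: m) -> U m) \/ (exists n, forall m, U (x ^+ n *: m)).

Definition primary_decomposition (R : comNzRingType) (M : lmodType R) (s : nat)
  (U : 'I_s -> M -> Prop) : Prop :=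
  (forall i, primary_submod (U i)) /\ (forall m, (forall i, U i m) -> m = 0).

Definition secondary_submod (R : comNzRingType) (M : lmodType R) (U : M -> Prop) : Prop :=
  is_submod U /\ (exists u, U u /\ u <> 0) /\
  forall x : R, (forall u, U u -> exists v, U v /\ x *: v = u) \/
                (exists n, forall u, U u -> x ^+ n *: u = 0).

Definition secondary_decomposition (R : comNzRingType) (M : lmodType R) (s : nat)
  (U : 'I_s -> M -> Prop) : Prop :=
  (forall i, secondary_submod (U i)) /\
  (forall m, exists u : 'I_s -> M, (forall i, U i (u i)) /\ m = \sum_(i < s) u i).

(* Since E is injective and m = Ann e contains every proper ideal, E is a
   cogenerator: a point y outside a submodule U is separated from U by a map
   M -> E vanishing on U and sending r y to r e.  This gives Ass M <= Att D(M)
   (use the maps vanishing at n), and Ass D(M) <= Att M by taking kernels.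
   Conversely, let p = Ann(X/U) be prime and X be covered by finitely many
   pieces X_i.  A product of elements of the Ann((X_i + U)/U) kills X/U, so by
   primality p contains, hence equals, one of these annihilators.  For a
   secondary decomposition the piece is a secondary V_j, and p = Ann f for any
   f separating a point of V_j from U.  For an irredundant primary
   decomposition 0 = cap W_i the pieces are the duals D(M/W_i), since
   D(M/(A cap B)) = D(M/A) + D(M/B).  Then p acts nilpotently on
   N = cap_(i <> j) W_i, which is nonzero with N cap W_j = 0, so every nonzero
   element of N has its annihilator inside p; the ascending chain condition
   then yields y in N with Ann y = p. *)

From HB Require Import structures.
From mathcomp Require Import all_boot all_order all_algebra.
From mathcomp Require Import boolp functions.
From mathcomp Require Import zify.
Set Implicit Arguments. Unset Strict Implicit.
Local Open Scope ring_scope.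
Import GRing.Theory.

Section Submodules.
Variables (R : comNzRingType) (M : lmodType R).

Lemma submodN (U : M -> Prop) : is_submod U -> forall x, U x -> U (- x).
Proof. by move=> [_ [_ UZ]] x Ux; rewrite -scaleN1r; apply: UZ. Qed.

Lemma submodB (U : M -> Prop) : is_submod U -> forall x y, U x -> U y -> U (x - y).
Proof. by move=> hU x y Ux Uy; case: (hU) => _ [UD _]; apply: UD => //; apply: submodN. Qed.

Lemma submod_sum (U : M -> Prop) (I : Type) (s : seq I) (F : I -> M) :
  is_submod U -> (forall i, U (F i)) -> U (\sum_(i <- s) F i).
Proof.
move=> [U0 [UD _]] UF; elim: s => [|i s IH]; first by rewrite big_nil.
by rewrite big_cons; apply: UD.
Qed.

Lemma submod0 : is_submod (fun x : M => x = 0).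
Proof. by split=> //; split=> [x y -> ->|r x ->]; rewrite ?addr0 ?scaler0. Qed.

Definition bigcap_seq (I : eqType) (W : I -> M -> Prop) (S : seq I) (x : M) :=
  forall i, i \in S -> W i x.

Lemma bigcap_seq_submod (I : eqType) (W : I -> M -> Prop) (S : seq I) :
  (forall i, is_submod (W i)) -> is_submod (bigcap_seq W S).
Proof.
move=> hW; split; first by move=> i _; case: (hW i).
split=> [x y Wx Wy|r x Wx] i iS; have [_ [WD WZ]] := hW i.
  by apply: WD; [apply: Wx | apply: Wy].
by apply: WZ; apply: Wx.
Qed.

(* The unused proof argument lets canonical structures find the closure proof
   of [D] from [submod_pred hD] and [submod_type hD]. *)
Definition submod_pred (D : M -> Prop) (_ : is_submod D) : {pred M} :=
  fun x => `[< D x >].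

Lemma submod_predP (D : M -> Prop) (hD : is_submod D) : submod_closed (submod_pred hD).
Proof.
case: hD => D0 [DD DZ]; split; first exact/asboolP.
by move=> a x y /asboolP Dx /asboolP Dy; apply/asboolP; apply: DD => //; apply: DZ.
Qed.

Section SubmodType.
Variables (D : M -> Prop) (hD : is_submod D).

HB.instance Definition _ := GRing.isSubmodClosed.Build R M _ (submod_predP hD).

Definition submod_type (h : is_submod D) := {x : M | x \in submod_pred h}.
HB.instance Definition _ := [isSub for (@sval M _ : submod_type hD -> M)].
HB.instance Definition _ := [Choice of submod_type hD by <:].
HB.instance Definition _ := [SubChoice_isSubLmodule of submod_type hD by <:].

Lemma submod_typeP (x : submod_type hD) : D (val x).
Proof. by have /asboolP := valP x. Qed.

End SubmodType.
End Submodules.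

Section LinearFun.
Variables (R : comNzRingType) (M E : lmodType R).
Implicit Type f : M -> E.

Lemma linear_fun0 f : linear_fun f -> f 0 = 0.
Proof. by case=> _ fZ; rewrite -(scale0r (0 : M)) fZ scale0r. Qed.

Lemma linear_funB f : linear_fun f -> forall x y, f (x - y) = f x - f y.
Proof. by case=> fD fZ x y; rewrite fD -scaleN1r fZ scaleN1r. Qed.

Lemma linear_funP (g : {linear M -> E}) : linear_fun g.
Proof. by split=> [x y|r x]; rewrite ?linearD ?linearZ. Qed.

Lemma linear_fun_comp (N : lmodType R) f (g : N -> M) :
  linear_fun f -> linear_fun g -> linear_fun (f \o g).
Proof. by move=> [fD fZ] [gD gZ]; split=> [x y|r x] /=; rewrite ?gD ?fD ?gZ ?fZ. Qed.

Lemma linear_fun_submod : is_submod (@linear_fun R M E).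
Proof.
split; first by split=> [x y|r x]; rewrite ?addr0 ?scaler0.
split=> [f g [fD fZ] [gD gZ]|r f [fD fZ]].
  by split=> [x y|s x]; rewrite !addrfctE /=; [rewrite fD gD addrACA | rewrite fZ gZ scalerDr].
by split=> [x y|s x]; rewrite !scalrfctE /=; [rewrite fD scalerDr | rewrite fZ !scalerA mulrC].
Qed.

Lemma kernel_submod f : linear_fun f -> is_submod (fun x => f x = 0).
Proof.
move=> [fD fZ]; split; first exact: linear_fun0.
by split=> [x y fx fy|r x fx]; rewrite ?fD ?fZ ?fx ?fy ?addr0 ?scaler0.
Qed.

(* [perp A] realizes the dual D(M/A) inside D(M). *)
Definition perp (A : M -> Prop) f := linear_fun f /\ forall u, A u -> f u = 0.

Lemma perp_submod (A : M -> Prop) : is_submod (perp A).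
Proof.
have [L0 [LD LZ]] := linear_fun_submod.
split; first by split=> // u _.
split=> [f g [lf fA] [lg gA]|r f [lf fA]]; split=> [|u Au].
- exact: LD.
- by rewrite addrfctE /= fA ?gA ?addr0.
- exact: LZ.
- by rewrite scalrfctE /= fA ?scaler0.
Qed.

End LinearFun.

Section PrimeIdeals.
Variables (R : comNzRingType) (p : R -> Prop) (pp : is_prime_ideal p).

Lemma prime_idealX r n : p (r ^+ n) -> p r.
Proof.
case: pp => _ [p1 pM]; elim: n => [|n IH]; first by rewrite expr0.
by rewrite exprS => /pM [].
Qed.

Lemma prime_ideal_prod (I : eqType) (s : seq I) (F : I -> R) :
  p (\prod_(i <- s) F i) -> exists2 i, i \in s & p (F i).
Proof.
case: pp => _ [p1 pM]; elim: s => [|a s IH]; first by rewrite big_nil.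
rewrite big_cons => /pM [pa|/IH [i iS pi]]; first by exists a; rewrite ?mem_head.
by exists i; rewrite // in_cons iS orbT.
Qed.

Lemma prime_ideal_avoid (I : eqType) (S : seq I) (K : I -> R -> Prop) :
  (forall r : I -> R, (forall i, i \in S -> K i (r i)) -> p (\prod_(i <- S) r i)) ->
  exists2 j, j \in S & forall r, K j r -> p r.
Proof.
move=> hprod; apply: contrapT => noj.
have /choice [r hr] : forall j, exists r, j \in S -> K j r /\ ~ p r.
  move=> j; apply: contrapT => nr; apply: noj; exists j => [|s Ks].
    by apply: contrapT => jS; apply: nr; exists 0.
  by apply: contrapT => ps; apply: nr; exists s.
have [i iS] := prime_ideal_prod (hprod r (fun i iS => (hr i iS).1)).
exact: (hr i iS).2.
Qed.

End PrimeIdeals.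

Lemma noetherian_no_strict_chain (R : comNzRingType) (I : nat -> R -> Prop) :
  noetherian_ring R -> (forall n, is_ideal (I n)) -> (forall n r, I n r -> I n.+1 r) ->
  ~ (forall n, exists r, I n.+1 r /\ ~ I n r).
Proof.
move=> HR hI incI strict; have [N hN] := HR I hI incI.
by have [r [r1 nr]] := strict N; apply/nr/(hN N.+1 (leqnSn N)).
Qed.

Lemma exists_irredundant_seq (I : eqType) (P : seq I -> Prop) (s : seq I) :
  P s -> exists2 S, P S & forall j, j \in S -> ~ P (filter (predC1 j) S).
Proof.
move=> Ps; have exP : exists n, `[< exists S, size S = n /\ P S >].
  by exists (size s); apply/asboolP; exists s.
case: (ex_minnP exP) => n /asboolP [S [<- PS]] minS; exists S => // j jS Pj.
have : (size S <= size (filter (predC1 j) S))%N.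
  by apply: minS; apply/asboolP; exists (filter (predC1 j) S).
have := count_predC (pred1 j) S; have : (0 < count (pred1 j) S)%N.
  by rewrite -has_count has_pred1.
have -> : size (filter (predC1 j) S) = count (predC (pred1 j)) S.
  by rewrite size_filter; apply: eq_count.
lia.
Qed.

Section InjectiveModule.
Variables (R : comNzRingType) (E : lmodType R) (hE : injective_module E) (M : lmodType R).

Lemma injective_extend (D : M -> Prop) (hD : is_submod D) (g : M -> E) :
  (forall x y, D x -> D y -> g (x + y) = g x + g y) ->
  (forall r x, D x -> g (r *: x) = r *: g x) ->
  exists f : M -> E, linear_fun f /\ forall x, D x -> f x = g x.
Proof.
move=> gD gZ; pose sT := submod_type hD.
have glin : linear (g \o val : sT -> E).
  move=> a x y /=; have [_ [_ DZ]] := hD.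
  by rewrite gD ?gZ //; try apply: DZ; apply: submod_typeP.
pose gs : {linear sT -> E} :=
  HB.pack (g \o val : sT -> E) (GRing.isLinear.Build R sT E _ _ glin).
have [f hf] := @hE _ _ (val : {linear sT -> M}) gs val_inj.
exists f; split; first exact: linear_funP.
by move=> x Dx; have := hf (Sub x (asboolT Dx)).
Qed.

Lemma injective_extend_along (N : lmodType R) (A : M -> Prop) (psi : N -> M) (phi : N -> E) :
  is_submod A -> linear_fun psi -> linear_fun phi -> (forall t, A (psi t) -> phi t = 0) ->
  exists f : M -> E, perp A f /\ forall t, f (psi t) = phi t.
Proof.
move=> hA lpsi lphi psiA; have [A0 [AD AZ]] := hA.
have phi_wd u t u' t' : A u -> A u' -> u + psi t = u' + psi t' -> phi t = phi t'.
  move=> Au Au' eq_ut; apply/eqP; rewrite -subr_eq0 -linear_funB //; apply/eqP/psiA.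
  have -> : psi (t - t') = u' - u.
    by rewrite linear_funB //; apply: (addrI u); rewrite [LHS]addrA eq_ut addrK addrC subrK.
  exact: submodB.
have /choice [g hg] : forall x, exists c, forall u t, A u -> x = u + psi t -> c = phi t.
  move=> x; case: (pselect (exists u t, A u /\ x = u + psi t)) => [[u [t [Au ->]]]|nD].
    by exists (phi t) => u' t' Au'; apply: phi_wd Au Au'.
  by exists 0 => u t Au ex; exfalso; apply: nD; exists u, t.
pose D x := exists u t, A u /\ x = u + psi t.
have hD : is_submod D.
  split; first by exists 0, 0; rewrite (linear_fun0 lpsi) addr0.
  split=> [x y [u [t [Au ->]]] [v [w [Av ->]]]|r x [u [t [Au ->]]]].
    by exists (u + v), (t + w); rewrite lpsi.1 addrACA; split; first apply: AD.
  by exists (r *: u), (r *: t); rewrite lpsi.2 scalerDr; split; first apply: AZ.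
have [||f [lf fg]] := injective_extend hD (g := g).
- move=> _ _ [u [t [Au ->]]] [v [w [Av ->]]].
  rewrite (hg (u + psi t) u t) // (hg (v + psi w) v w) // -lphi.1.
  by apply: (hg _ (u + v)); [apply: AD | rewrite lpsi.1 addrACA].
- move=> r _ [u [t [Au ->]]].
  rewrite (hg (u + psi t) u t) // -lphi.2.
  by apply: (hg _ (r *: u)); [apply: AZ | rewrite lpsi.2 scalerDr].
exists f; split; first split=> // u Au.
  rewrite fg; last by exists u, 0; rewrite (linear_fun0 lpsi) addr0.
  by rewrite (hg u u 0) ?(linear_fun0 lpsi, linear_fun0 lphi, addr0).
move=> t; rewrite fg; last by exists 0, t; rewrite add0r.
by rewrite (hg _ 0 t) ?add0r.
Qed.

Lemma perp_capI_sum (A B : M -> Prop) (f : M -> E) : is_submod A -> is_submod B ->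
  linear_fun f -> (forall u, A u -> B u -> f u = 0) ->
  exists g, perp A g /\ perp B (f - g).
Proof.
move=> hA hB lf fAB; pose sT := submod_type hB.
have lval : linear_fun (val : sT -> M) by exact: linear_funP (val : {linear sT -> M}).
have [||g [pg gf]] := injective_extend_along (psi := val) (phi := f \o val) hA lval.
- exact: linear_fun_comp.
- by move=> t At; apply: fAB => //; apply: submod_typeP.
exists g; split=> //; split; first by apply: submodB; [exact: linear_fun_submod | | case: pg].
move=> u Bu; have /= gu := gf (Sub u (asboolT Bu)).
by change (f u - g u = 0); rewrite gu subrr.
Qed.

Lemma dual_scale_onto (W : M -> Prop) (r : R) (g : M -> E) : is_submod W ->
  (forall x, W (r *: x) -> W x) -> perp W g -> exists h, perp W h /\ r *: h = g.
Proof.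
move=> hW rW [lg gW].
have lr : linear_fun (fun x : M => r *: x).
  by split=> [x y|a x]; rewrite ?scalerDr // !scalerA mulrC.
have [|h [ph hr]] := injective_extend_along (phi := g) hW lr lg.
  by move=> t /rW; apply: gW.
exists h; split=> //; apply/funext => x /=.
by rewrite scalrfctE -ph.1.2 hr.
Qed.

Lemma scale_perp_bigcap (I : eqType) (W : I -> M -> Prop) (U : (M -> E) -> Prop) (r : R) :
  is_submod U -> (forall i, is_submod (W i)) -> forall S : seq I,
  (forall i, i \in S -> forall g, perp (W i) g -> U (r *: g)) ->
  forall f, perp (bigcap_seq W S) f -> U (r *: f).
Proof.
move=> hU hW; elim=> [|a S IH] hS f [lf fW].
  have -> : f = 0 by apply/funext => x; apply: fW.
  by rewrite scaler0; case: hU.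
have [||g [pg pfg]] := @perp_capI_sum (W a) (bigcap_seq W S) f (hW a) _ lf.
- exact: bigcap_seq_submod.
- by move=> u Wu Su; apply: fW => i; rewrite in_cons => /orP [/eqP ->|/Su].
have -> : f = g + (f - g) by rewrite addrC subrK.
have [_ [UD _]] := hU; rewrite scalerDr; apply: UD; first exact: hS (mem_head _ _) _ pg.
by apply: IH pfg => i iS; apply: hS; rewrite in_cons iS orbT.
Qed.

End InjectiveModule.

Section Annihilators.
Variables (R : comNzRingType) (M : lmodType R).

Lemma last_nonzero_power (r : R) n (z : M) : z <> 0 -> r ^+ n *: z = 0 ->
  exists k, r ^+ k *: z <> 0 /\ r *: (r ^+ k *: z) = 0.
Proof.
elim: n z => [|n IH] z znz; first by rewrite expr0 scale1r.
case: (pselect (r *: z = 0)) => [rz _|rz]; first by exists 0%N; rewrite expr0 scale1r.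
rewrite exprSr -scalerA => /(IH _ rz) [k [rk rk1]].
by exists k.+1; rewrite exprSr -scalerA.
Qed.

Lemma exists_annihilated_of_nilpotent (N : M -> Prop) (P : R -> Prop) :
  noetherian_ring R -> is_submod N ->
  (forall r, P r -> forall x, N x -> exists n, r ^+ n *: x = 0) ->
  (exists y, N y /\ y <> 0) -> exists y, N y /\ y <> 0 /\ forall r, P r -> r *: y = 0.
Proof.
move=> HR [_ [_ NZ]] nilP [y0 [Ny0 y0nz]]; apply: contrapT => noy.
(* otherwise [y |-> r^k y] strictly enlarges annihilators forever *)
have /choice [T hT] : forall y, exists y', N y /\ y <> 0 ->
    [/\ N y', y' <> 0, forall a, a *: y = 0 -> a *: y' = 0 &
        exists a, a *: y' = 0 /\ a *: y <> 0].
  move=> y; case: (pselect (N y /\ y <> 0)) => [[Ny ynz]|]; last by exists 0.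
  have [r [Pr ry]] : exists r, P r /\ r *: y <> 0.
    apply: contrapT => allr; apply: noy; exists y; split=> //; split=> // r Pr.
    by apply: contrapT => ry; apply: allr; exists r.
  have [n rn] := nilP r Pr y Ny; have [k [rk rk1]] := last_nonzero_power ynz rn.
  exists (r ^+ k *: y) => _; split=> //; first exact: NZ.
    by move=> a ay; rewrite scalerA mulrC -scalerA ay scaler0.
  by exists r.
pose ys n := iter n T y0.
have ysP n : N (ys n) /\ ys n <> 0.
  by elim: n => [|n [Nn nzn]] //=; have [] := hT _ (conj Nn nzn).
apply: (@noetherian_no_strict_chain _ (fun n a => a *: ys n = 0) HR).
- move=> n; split; first by rewrite scale0r.
  by split=> [a b ha hb|c a ha]; rewrite ?scalerDl ?ha ?hb ?addr0 // -scalerA ha scaler0.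
- by move=> n a; have [_ _ incr _] := hT _ (ysP n); apply: incr.
- by move=> n; have [_ _ _ [a]] := hT _ (ysP n); exists a.
Qed.

End Annihilators.

Lemma Ass_dual_sub_Att (R : comNzRingType) (M E : lmodType R) (p : R -> Prop) :
  Ass (@DualMod R M E) p -> Att (fun _ : M => True) p.
Proof.
case=> pp [f [lf hf]]; split=> //.
exists (fun x => f x = 0); split; first exact: kernel_submod.
split=> // r; rewrite hf; split.
  by move=> rf x _; rewrite lf.2; change ((r *: f) x = 0); rewrite rf.
by move=> rker; apply/funext => x; rewrite scalrfctE /= -lf.2 rker.
Qed.

Section MatlisDual.
Variables (R : comNzRingType) (m : R -> Prop) (E : lmodType R).
Hypotheses (Hloc : local_ring m) (hinj : injective_module E).
Variables (e : E) (he : forall r, m r <-> r *: e = 0) (M : lmodType R).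

Lemma dual_separates (U : M -> Prop) (y : M) :
  is_submod U -> ~ U y -> exists f : M -> E, perp U f /\ f y <> 0.
Proof.
move=> hU nUy; have [U0 [UD UZ]] := hU; have [_ [m1 mmax]] := Hloc.
have lin_scale (V : lmodType R) (x : V) : linear_fun (M := R^o) (fun r => r *: x).
  by split=> [a b|a b]; rewrite ?scalerDl // scalerA.
have [|f [pf fe]] := injective_extend_along hinj hU (lin_scale _ y) (lin_scale _ e).
  move=> r Ury; apply/he/(mmax (fun s => U (s *: y))) => //; last by rewrite scale1r.
  split; first by rewrite scale0r.
  by split=> [a b Ua Ub|c a Ua]; rewrite ?scalerDl -?scalerA; [apply: UD | apply: UZ].
exists f; split=> //; have /= := fe 1; rewrite !scale1r => -> e0.
by apply/m1/he; rewrite e0 scaler0.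
Qed.

Lemma Ass_sub_Att_dual (p : R -> Prop) :
  Ass (fun _ : M => True) p -> Att (@DualMod R M E) p.
Proof.
case=> pp [n [_ hn]]; split=> //.
exists (perp (fun x => x = n)); split; first exact: perp_submod.
split; first by move=> f [].
move=> r; rewrite hn; split.
  move=> rn f lf; have [_ [_ LZ]] := linear_fun_submod M E; split; first exact: LZ.
  by move=> _ ->; rewrite scalrfctE /= -lf.2 rn linear_fun0.
move=> rperp; apply: contrapT => rn.
have [f [pf fr]] := dual_separates (@submod0 R M) rn.
by have [_ /(_ n erefl)] := rperp f pf.1; rewrite scalrfctE /= -pf.1.2.
Qed.

Lemma Att_sub_Ass_dual (s : nat) (V : 'I_s -> M -> Prop) (p : R -> Prop) :
  secondary_decomposition V -> Att (fun _ : M => True) p -> Ass (@DualMod R M E) p.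
Proof.
case=> hsec hsum [pp [U [hU [_ hp]]]]; have [_ [_ UZ]] := hU.
pose J i r := forall u, V i u -> U (r *: u).
have [j _ Jp] : exists2 j, j \in index_enum 'I_s & forall r, J j r -> p r.
  apply: prime_ideal_avoid => // r Jr; apply/hp => x _.
  have [u [Vu ->]] := hsum x; rewrite scaler_sumr; apply: submod_sum => // i.
  rewrite (bigD1 i) //= mulrC -scalerA; apply/UZ/Jr => //; exact: mem_index_enum.
have [y [Vy nUy]] : exists y, V j y /\ ~ U y.
  apply: contrapT => allU; case: pp => _ [p1 _]; apply/p1/Jp => u Vu.
  by rewrite scale1r; apply: contrapT => nU; apply: allU; exists u.
have [f [[lf fU] fy]] := dual_separates hU nUy.
split=> //; exists f; split=> // r; split.
  by move=> /hp pr; apply/funext => x; rewrite scalrfctE /= -lf.2; apply/fU/pr.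
move=> rf; have [_ [_ /(_ r) [onto|[n nil]]]] := hsec j.
  have [v [Vv rv]] := onto y Vy; case: fy.
  by rewrite -rv lf.2; change ((r *: f) v = 0); rewrite rf.
by apply: (prime_idealX pp (n := n)); apply: Jp => u Vu; rewrite nil; case: hU.
Qed.

Lemma Ass_of_primary_component (W N : M -> Prop) (U : (M -> E) -> Prop) (p : R -> Prop) :
  noetherian_ring R -> primary_submod W -> is_submod N -> is_submod U ->
  is_prime_ideal p -> (forall x, N x -> W x -> x = 0) -> (exists y, N y /\ y <> 0) ->
  (forall r, p r <-> forall g, perp W g -> U (r *: g)) -> Ass (fun _ : M => True) p.
Proof.
move=> HR [hW [_ primW]] hN hU pp NW Nnz hpW.
have nil_in_p r n : (forall x, W (r ^+ n *: x)) -> p r.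
  move=> rnW; apply: (prime_idealX pp (n := n)); apply/hpW => g [lg gW].
  suff -> : r ^+ n *: g = 0 by case: hU.
  by apply/funext => x; rewrite scalrfctE /= -lg.2 gW.
have annN_sub y r : N y -> y <> 0 -> r *: y = 0 -> p r.
  move=> Ny ynz ry; case: (primW r) => [rW|[n rnW]]; last exact: nil_in_p rnW.
  by case: ynz; apply: NW => //; apply: rW; rewrite ry; case: hW.
(* an [r] acting injectively on [M/W] acts surjectively on its dual, forcing [1 \in p] *)
have p_nil r : p r -> forall x, N x -> exists n, r ^+ n *: x = 0.
  move=> pr x Nx; case: (primW r) => [rW|[n rnW]].
    case: pp => _ [p1 _]; case: p1; apply/hpW => g pg.
    have [h [ph <-]] := dual_scale_onto hinj hW rW pg.
    by rewrite scale1r; exact: (hpW r).1 pr h ph.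
  by exists n; apply: NW (rnW x); have [_ [_ NZ]] := hN; apply: NZ.
have [y [Ny [ynz py]]] := exists_annihilated_of_nilpotent HR hN p_nil Nnz.
by split=> //; exists y; split=> // r; split; [exact: py | exact: annN_sub].
Qed.

Lemma Att_dual_sub_Ass (s : nat) (W : 'I_s -> M -> Prop) (p : R -> Prop) :
  noetherian_ring R -> primary_decomposition W ->
  Att (@DualMod R M E) p -> Ass (fun _ : M => True) p.
Proof.
move=> HR [hprim hdec] [pp [U [hU [_ hp]]]].
have hW i : is_submod (W i) := (hprim i).1.
have [S capS0 irrS] := @exists_irredundant_seq _
  (fun S => forall x, bigcap_seq W S x -> x = 0) (enum 'I_s)
  (fun x Wx => hdec x (fun i => Wx i (mem_enum _ i))).
pose K i r := forall g, perp (W i) g -> U (r *: g).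
have [j jS Kjp] : exists2 j, j \in S & forall r, K j r -> p r.
  apply: prime_ideal_avoid => // r Kr; apply/hp => f lf.
  apply: (scale_perp_bigcap hinj hU hW (S := S)); last first.
    by split=> // x /capS0 ->; exact: linear_fun0.
  move=> i iS g pg; rewrite (big_rem i iS) /= mulrC -scalerA.
  by have [_ [_ UZ]] := hU; apply/UZ/Kr.
apply: (Ass_of_primary_component (N := bigcap_seq W (filter (predC1 j) S)) HR (hprim j)).
- exact: bigcap_seq_submod.
- exact: hU.
- exact: pp.
- move=> x Nx Wjx; apply: capS0 => i iS; case: (eqVneq i j) => [-> //|ij].
  by apply: Nx; rewrite mem_filter /= ij iS.
- apply: contrapT => noy; apply: (irrS j jS) => x Nx.
  by apply: contrapT => xnz; apply: noy; exists x.
- by move=> r; split; [move=> /hp pr g [lg _]; exact: pr | exact: Kjp].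
Qed.

End MatlisDual.

Theorem mainTheorem3 (R : comNzRingType) (m : R -> Prop) (E : lmodType R)
  (HR : noetherian_ring R) (Hloc : local_ring m)
  (HE : injective_hull_residue m E) (M : lmodType R) :
  ((exists (s : nat) (U : 'I_s -> M -> Prop), primary_decomposition U) ->
     forall p : R -> Prop,
       Ass (fun _ : M => True) p <-> Att (@DualMod R M E) p) /\
  ((exists (s : nat) (U : 'I_s -> M -> Prop), secondary_decomposition U) ->
     forall p : R -> Prop,
       Att (fun _ : M => True) p <-> Ass (@DualMod R M E) p).
Proof.
case: HE => hinj [e [he _]].
split=> -[s [U hU]] p; split.
- exact (Ass_sub_Att_dual (M := M) (p := p) Hloc hinj he).
- exact (Att_dual_sub_Ass hinj HR hU).
- exact (Att_sub_Ass_dual Hloc hinj he hU).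
- exact (Ass_dual_sub_Att (p := p)).
Qed.
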